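(* Let $\Phi\colon\mathbb X\rightrightarrows\mathbb Y$ have closed graph, $(\bar x,\bar y)\in\operatorname{gph}\Phi$, $u\in\mathbb S_{\mathbb X}$, $\gamma>1$, and assume $\ker D^*_\gamma\Phi((\bar x,\bar y);(u,0))=\{0\}$. If for all $\alpha,\beta\ge0$ \[\widetilde D^*_\gamma\Phi((\bar x,\bar y);(u,0))(0)\cup\bigcup_{v\in\mathbb S_{\mathbb Y}}D^*_\gamma\Phi((\bar x,\bar y);(u,\alpha v))(\beta v)\subset\operatorname{Im}D^*\Phi(\bar x,\bar y),\] in particular if $\operatorname{Im}\widetilde D^*_\gamma\Phi((\bar x,\bar y);(u,0))\subset\operatorname{Im}D^*\Phi(\bar x,\bar y)$, then $\Phi$ is asymptotically regular at $(\bar x,\bar y)$ in direction $u$.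
   Context: $\widehat D^*,D^*$ regular and limiting coderivatives; $\ker\Psi=\{y^*\mid0\in\Psi(y^* )\}$, $\operatorname{Im}\Psi=\bigcup_{y^*}\Psi(y^* )$. Pseudo-coderivative of order $\gamma$ in direction $(u,v)\in\mathbb S_{\mathbb X}\times\mathbb Y$: $x^*\in D^*_\gamma\Phi((\bar x,\bar y);(u,v))(y^* )$ iff there are $u_k\to u$, $v_k\to v$, $x_k^*\to x^*$, $y_k^*\to y^*$, $t_k\searrow0$ with $(t_k\|u_k\|)^{\gamma-1}x_k^*\in\widehat D^*\Phi(\bar x+t_ku_k,\bar y+(t_k\|u_k\|)^\gamma v_k)(y_k^* )$. Gfrerer's pseudo-coderivative $\widetilde D^*_\gamma\Phi((\bar x,\bar y);(u,v))$: same with $\bar y+t_kv_k$ instead. Asymptotic regularity in direction $u$: for all $\{(x_k,y_k)\}\subset\operatorname{gph}\Phi$, $\{x_k^*\}$, $\{\lambda_k\}$, $x^*,y^*$ with $x_k\notin\Phi^{-1}(\bar y)$, $y_k\ne\bar y$, $x_k^*\in\widehat D^*\Phi(x_k,y_k)(\lambda_k)$, $x_k\to\bar x$, $y_k\to\bar y$, $x_k^*\to x^*$, $(x_k-\bar x)/\|x_k-\bar x\|\to u$, $(y_k-\bar y)/\|x_k-\bar x\|\to0$, $\|\lambda_k\|\to\infty$, $(y_k-\bar y)/\|y_k-\bar y\|-\lambda_k/\|\lambda_k\|\to0$, $(\|y_k-\bar y\|/\|x_k-\bar x\|)\lambda_k\to y^*$, one has $x^*\in\operatorname{Im}D^*\Phi(\bar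 x,\bar y)$. *)

(* X = 'rV[R]_n, Y = 'rV[R]_m (Euclidean spaces), R : realType. *)
From HB Require Import structures.
From mathcomp Require Import all_boot all_order all_algebra.
From mathcomp Require Import all_classical all_reals all_analysis.
Set Implicit Arguments. Unset Strict Implicit. Unset Printing Implicit Defensive.
Import Order.TTheory GRing.Theory Num.Theory.
Import numFieldNormedType.Exports.
Local Open Scope classical_set_scope.
Local Open Scope ring_scope.

Section Defs.
Variable R : realType.

Definition dotv (n : nat) (a b : 'rV[R]_n) : R := \sum_(i < n) a 0 i * b 0 i.
Definition enorm (n : nat) (a : 'rV[R]_n) : R := Num.sqrt (dotv a a).

(* set-valued maps X ⇉ Y are given by their graph relation: Phi x y <-> y ∈ Phi(x) *)
Definition closed_graph (n m : nat) (Phi : 'rV[R]_n -> 'rV[R]_m -> Prop) : Prop :=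
  closed ([set p | Phi p.1 p.2] : set ('rV[R]_n * 'rV[R]_m)%type).

(* regular (Frechet) coderivative: reg_coderiv Phi x y ys xs iff (xs,-ys) is a regular
   normal to gph Phi at (x,y), with (x,y) in gph Phi *)
Definition reg_coderiv (n m : nat) (Phi : 'rV[R]_n -> 'rV[R]_m -> Prop)
  (x : 'rV[R]_n) (y : 'rV[R]_m) (ys : 'rV[R]_m) (xs : 'rV[R]_n) : Prop :=
  Phi x y /\
  forall e : R, 0 < e -> exists2 d : R, 0 < d &
    forall (x' : 'rV[R]_n) (y' : 'rV[R]_m), Phi x' y' ->
      Num.sqrt (enorm (x' - x) ^+ 2 + enorm (y' - y) ^+ 2) < d ->
      dotv xs (x' - x) - dotv ys (y' - y)
        <= e * Num.sqrt (enorm (x' - x) ^+ 2 + enorm (y' - y) ^+ 2).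

Definition lim_coderiv (n m : nat) (Phi : 'rV[R]_n -> 'rV[R]_m -> Prop)
  (xb : 'rV[R]_n) (yb : 'rV[R]_m) (ys : 'rV[R]_m) (xs : 'rV[R]_n) : Prop :=
  exists (xk : nat -> 'rV[R]_n) (yk : nat -> 'rV[R]_m)
         (xsk : nat -> 'rV[R]_n) (ysk : nat -> 'rV[R]_m),
    [/\ xk @ \oo --> xb, yk @ \oo --> yb, xsk @ \oo --> xs, ysk @ \oo --> ys &
        forall k, reg_coderiv Phi (xk k) (yk k) (ysk k) (xsk k)].

Definition Im_coderiv (n m : nat) (Psi : 'rV[R]_m -> 'rV[R]_n -> Prop) (xs : 'rV[R]_n) : Prop :=
  exists ys, Psi ys xs.

Definition ker_coderiv (n m : nat) (Psi : 'rV[R]_m -> 'rV[R]_n -> Prop) (ys : 'rV[R]_m) : Prop :=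
  Psi ys 0.

Definition pseudo_coderiv (n m : nat) (gamma : R) (Phi : 'rV[R]_n -> 'rV[R]_m -> Prop)
  (xb : 'rV[R]_n) (yb : 'rV[R]_m) (u : 'rV[R]_n) (v : 'rV[R]_m)
  (ys : 'rV[R]_m) (xs : 'rV[R]_n) : Prop :=
  exists (uk : nat -> 'rV[R]_n) (vk : nat -> 'rV[R]_m)
         (xsk : nat -> 'rV[R]_n) (ysk : nat -> 'rV[R]_m) (tk : nat -> R),
    [/\ uk @ \oo --> u, vk @ \oo --> v, xsk @ \oo --> xs, ysk @ \oo --> ys &
        tk @ \oo --> (0 : R)] /\ (forall k, 0 < tk k) /\
        forall k, reg_coderiv Phi (xb + tk k *: uk k)
                    (yb + ((tk k * enorm (uk k)) `^ gamma) *: vk k) (ysk k)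
                    (((tk k * enorm (uk k)) `^ (gamma - 1)) *: xsk k).

Definition G_pseudo_coderiv (n m : nat) (gamma : R) (Phi : 'rV[R]_n -> 'rV[R]_m -> Prop)
  (xb : 'rV[R]_n) (yb : 'rV[R]_m) (u : 'rV[R]_n) (v : 'rV[R]_m)
  (ys : 'rV[R]_m) (xs : 'rV[R]_n) : Prop :=
  exists (uk : nat -> 'rV[R]_n) (vk : nat -> 'rV[R]_m)
         (xsk : nat -> 'rV[R]_n) (ysk : nat -> 'rV[R]_m) (tk : nat -> R),
    [/\ uk @ \oo --> u, vk @ \oo --> v, xsk @ \oo --> xs, ysk @ \oo --> ys &
        tk @ \oo --> (0 : R)] /\ (forall k, 0 < tk k) /\
        forall k, reg_coderiv Phi (xb + tk k *: uk k) (yb + tk k *: vk k) (ysk k)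
                    (((tk k * enorm (uk k)) `^ (gamma - 1)) *: xsk k).

Definition asymp_regular (n m : nat) (Phi : 'rV[R]_n -> 'rV[R]_m -> Prop)
  (xb : 'rV[R]_n) (yb : 'rV[R]_m) (u : 'rV[R]_n) : Prop :=
  forall (xk : nat -> 'rV[R]_n) (yk : nat -> 'rV[R]_m) (xsk : nat -> 'rV[R]_n)
         (lam : nat -> 'rV[R]_m) (xs : 'rV[R]_n) (ys : 'rV[R]_m),
    (forall k, Phi (xk k) (yk k)) ->
    (forall k, ~ Phi (xk k) yb) ->
    (forall k, yk k <> yb) ->
    (forall k, reg_coderiv Phi (xk k) (yk k) (lam k) (xsk k)) ->
    xk @ \oo --> xb ->
    yk @ \oo --> yb ->
    xsk @ \oo --> xs ->
    (fun k => (enorm (xk k - xb))^-1 *: (xk k - xb)) @ \oo --> u ->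
    (fun k => (enorm (xk k - xb))^-1 *: (yk k - yb)) @ \oo --> (0 : 'rV[R]_m) ->
    (fun k => enorm (lam k)) @ \oo --> +oo ->
    (fun k => (enorm (yk k - yb))^-1 *: (yk k - yb) - (enorm (lam k))^-1 *: lam k)
       @ \oo --> (0 : 'rV[R]_m) ->
    (fun k => (enorm (yk k - yb) / enorm (xk k - xb)) *: lam k) @ \oo --> ys ->
    Im_coderiv (lim_coderiv Phi xb yb) xs.

End Defs.

From HB Require Import structures.
From mathcomp Require Import all_boot all_order all_algebra.
From mathcomp Require Import all_classical all_reals all_analysis.
From mathcomp Require Import ring.
Set Implicit Arguments. Unset Strict Implicit. Unset Printing Implicit Defensive.
Import Order.TTheory GRing.Theory Num.Theory.
Import numFieldNormedType.Exports.
Local Open Scope classical_set_scope.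
Local Open Scope ring_scope.

(* Fix sequences as in the definition of asymptotic regularity and put
   t_k = |x_k - xb|, c_k = t_k^(gamma - 1) and s_k = c_k |lambda_k|.  Regular
   coderivatives are positively homogeneous, so c_k x*_k is a regular
   coderivative of Phi at (x_k, y_k) = (xb + t_k u_k, yb + t_k^gamma v_k) in
   the direction c_k lambda_k:
   this is exactly the scaling in the definitions of the pseudo-coderivatives.
   As y_k - yb is asymptotically aligned with lambda_k, v_k behaves like
   (|y*| / s_k) lambda_k / |lambda_k|.  If s_k -> oo, dividing further by s_k
   makes any cluster point of lambda_k / |lambda_k| a unit vector of
   ker D^*_gamma Phi((xb, yb); (u, 0)), which is excluded.  Otherwise c_k lambda_k
   has a subsequence converging to some y', whence
   x* in D~^*_gamma Phi((xb, yb); (u, 0))(y') and, when y' <> 0,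
   x* in D^*_gamma Phi((xb, yb); (u, alpha v))(beta v) for v = y' / |y'|,
   beta = |y'| and alpha = |y*| / |y'|. *)

Section EuclideanNorm.
Variables (R : realType) (n : nat).
Implicit Types (a b : 'rV[R]_n).

Lemma dotvZl (c : R) a b : dotv (c *: a) b = c * dotv a b.
Proof. by rewrite /dotv mulr_sumr; apply: eq_bigr => i _; rewrite mxE mulrA. Qed.

Lemma dotvv_ge0 a : 0 <= dotv a a.
Proof. by apply: sumr_ge0 => i _; rewrite -expr2 sqr_ge0. Qed.

Lemma enorm_ge0 a : 0 <= enorm a.
Proof. exact: sqrtr_ge0. Qed.

Lemma enormZ (c : R) a : enorm (c *: a) = `|c| * enorm a.
Proof.
rewrite /enorm dotvZl /dotv.
under [X in c * X]eq_bigr do rewrite mxE mulrCA.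
by rewrite -mulr_sumr mulrA -expr2 sqrtrM ?sqr_ge0 // sqrtr_sqr.
Qed.

Lemma coord_le_enorm a (j : 'I_n) : `|a 0 j| <= enorm a.
Proof.
rewrite /enorm -sqrtr_sqr ler_sqrt; last exact: dotvv_ge0.
rewrite /dotv (bigD1 j) //= expr2 lerDl.
by apply: sumr_ge0 => i _; rewrite -expr2 sqr_ge0.
Qed.

Lemma normr_le_enorm a : `|a| <= enorm a.
Proof.
rewrite [leLHS]/Num.Def.normr /= mx_normrE.
apply: bigmax_le => [|[i j] _ /=]; first exact: enorm_ge0.
by rewrite (ord1 i); exact: coord_le_enorm.
Qed.

Lemma enorm_eq0 a : (enorm a == 0) = (a == 0).
Proof.
apply/eqP/eqP => [a0|->]; last first.
  by rewrite /enorm /dotv big1 ?sqrtr0 // => i _; rewrite mxE mul0r.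
apply/rowP => j; rewrite mxE; apply/eqP; rewrite -normr_le0 -a0.
exact: coord_le_enorm.
Qed.

Lemma enorm_gt0 a : (0 < enorm a) = (a != 0).
Proof. by rewrite lt_neqAle enorm_ge0 andbT eq_sym enorm_eq0. Qed.

Lemma enorm0 : enorm (0 : 'rV[R]_n) = 0.
Proof. by apply/eqP; rewrite enorm_eq0. Qed.

Lemma enorm_normalize a : a != 0 -> enorm ((enorm a)^-1 *: a) = 1.
Proof.
rewrite -enorm_gt0 => a_gt0.
by rewrite enormZ ger0_norm ?invr_ge0 ?ltW // mulVf ?gt_eqF.
Qed.

Lemma scale_enorm_normalize a : a != 0 -> enorm a *: ((enorm a)^-1 *: a) = a.
Proof. by rewrite -enorm_gt0 => a_gt0; rewrite scalerA mulfV ?gt_eqF // scale1r. Qed.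

Lemma cvgn_sum (I : Type) (s : seq I) (f : nat -> I -> R) (l : I -> R) :
  (forall i, f ^~ i @ \oo --> l i) ->
  (fun k => \sum_(i <- s) f k i) @ \oo --> \sum_(i <- s) l i.
Proof.
move=> fl; elim: s => [|i s ih].
  by rewrite big_nil; under eq_fun do rewrite big_nil; exact: cvg_cst.
by rewrite big_cons; under eq_fun do rewrite big_cons; exact: cvgD.
Qed.

Lemma cvg_enorm (z : nat -> 'rV[R]_n) (L : 'rV[R]_n) :
  z @ \oo --> L -> (fun k => enorm (z k)) @ \oo --> enorm L.
Proof.
move=> zL; have coordL i : (fun k => z k 0 i) @ \oo --> L 0 i.
  exact: continuous_cvg (@coord_continuous R 1 n 0 i L) zL.
have dotL : (fun k => dotv (z k) (z k)) @ \oo --> dotv L L.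
  by apply: cvgn_sum => i; apply: cvgM; exact: coordL.
exact: continuous_cvg (@sqrt_continuous R _) dotL.
Qed.

Lemma enorm_cvg0 (z : nat -> 'rV[R]_n) :
  (fun k => enorm (z k)) @ \oo --> (0 : R) -> z @ \oo --> (0 : 'rV[R]_n).
Proof.
move=> /cvgr0Pnorm_lt z0; apply/cvgr0Pnorm_lt => e e_gt0.
near=> k; apply: le_lt_trans (normr_le_enorm _) _.
by rewrite -[enorm _]ger0_norm ?enorm_ge0 //; near: k; exact: z0.
Unshelve. all: by end_near.
Qed.

Lemma enorm_bounded_cvg_subseq (z : nat -> 'rV[R]_n) (M : R) :
  (forall k, enorm (z k) <= M) ->
  exists2 f : nat -> nat, increasing_seq f & exists L : 'rV[R]_n, (z \o f) @ \oo --> L.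
Proof.
move=> zM; pose A := closed_ball_ Num.Def.normr (0 : 'rV[R]_n) M.
have A_compact : compact A.
  apply: bounded_closed_compact; last exact: closed_closed_ball_.
  exists M; split; first exact: num_real.
  move=> M' MM' v; rewrite /A /closed_ball_ /= sub0r normrN => vM.
  exact: le_trans vM (ltW MM').
have zA : (z @ \oo) A.
  exists 0%N => // k _; rewrite /A /closed_ball_ /= sub0r normrN.
  exact: le_trans (normr_le_enorm _) (zM k).
have [L [_ clL]] := A_compact _ _ zA.
pose d k := `|L - z k|.
have d_cluster0 : cluster (d @ \oo) 0.
  apply/cluster_eventuallyP => e N e_gt0.
  have zN : (z @ \oo) [set v | exists2 p, (N <= p)%N & v = z p].
    by exists N => // p /= Np; exists p.
  have [_ [[p Np ->]]] := clL _ _ zN (nbhsx_ballx L e e_gt0).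
  rewrite -ball_normE /ball_ /= => Lp.
  by exists p => //; rewrite sub0r normrN /d normr_id ltW.
have [f f_incr df] := (cluster_eventually_cvg d 0).1 d_cluster0.
exists f => //; exists L; apply/cvgrPdist_lt => e e_gt0.
move/cvgrPdist_lt : df => /(_ e e_gt0); apply: filterS => k /=.
by rewrite sub0r normrN /d normr_id.
Qed.

End EuclideanNorm.

Lemma increasing_seq_comp (f g : nat -> nat) :
  increasing_seq f -> increasing_seq g -> increasing_seq (f \o g).
Proof. by move=> f_incr g_incr a b /=; rewrite f_incr; exact: g_incr. Qed.

Lemma increasing_seq_ge (f : nat -> nat) : increasing_seq f -> forall k, (k <= f k)%N.
Proof.
move=> /increasing_seqP f_incr; elim=> // k ih.
exact: leq_ltn_trans ih (f_incr k).
Qed.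

Lemma cvg_subseq (T : Type) (z : nat -> T) (L : set_system T) (f : nat -> nat) :
  increasing_seq f -> z @ \oo --> L -> (z \o f) @ \oo --> L.
Proof.
move=> f_incr; apply: cvg_comp => P [N _ NP]; exists N => // k /= Nk.
exact/NP/(leq_trans Nk (increasing_seq_ge f_incr k)).
Qed.

Lemma cvg_near_eq (T : Type) (f g : nat -> T) (L : set_system T) :
  (\forall k \near \oo, f k = g k) -> g @ \oo --> L -> f @ \oo --> L.
Proof. by move=> fg gL; apply: cvg_trans gL; apply: near_eq_cvg; apply: filterS fg. Qed.

Lemma frequently_subseq (P : nat -> Prop) :
  (forall N, exists2 k, (N <= k)%N & P k) ->
  exists2 f : nat -> nat, increasing_seq f & forall k, P (f k).
Proof.
move=> P_freq; pose next N := sval (cid2 (P_freq N.+1)).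
have nextP N : (N < next N)%N /\ P (next N) by rewrite /next; case: cid2.
exists (fun k => iter k next (next 0)).
  by apply/increasing_seqP => k; rewrite iterS; exact: (nextP _).1.
by case=> [|k]; rewrite ?iterS; exact: (nextP _).2.
Qed.

Lemma cvgry_or_bounded_subseq (R : realType) (s : nat -> R) :
  s @ \oo --> +oo \/
  exists M, exists2 f : nat -> nat, increasing_seq f & forall k, s (f k) <= M.
Proof.
have [[M sM]|sy] := pselect (exists M, forall N, exists2 k, (N <= k)%N & s k <= M).
  by have [f f_incr fM] := frequently_subseq sM; right; exists M, f.
left; apply/cvgryPge => M.
have /existsNP[N sN] : ~ forall N, exists2 k, (N <= k)%N & s k <= M.
  by move=> H; apply: sy; exists M.
exists N => // k /= Nk; rewrite leNgt; apply/negP => /ltW skM.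
by apply: sN; exists k.
Qed.

Lemma powR_subr1 (R : realType) (x p : R) : 0 < x -> x `^ p = x * x `^ (p - 1).
Proof.
move=> x_gt0; have := @powRD R x 1 (p - 1).
by rewrite (gt_eqF x_gt0) implybT powRr1 ?ltW // => <- //; rewrite addrC subrK.
Qed.

Lemma reg_coderiv_scale (R : realType) (n m : nat) (Phi : 'rV[R]_n -> 'rV[R]_m -> Prop)
    x y ys xs (c : R) :
  0 <= c -> reg_coderiv Phi x y ys xs -> reg_coderiv Phi x y (c *: ys) (c *: xs).
Proof.
move=> c_ge0 [Pxy reg]; split => // e e_gt0.
have [->|c_neq0] := eqVneq c 0.
  exists 1 => // x' y' _ _; rewrite !dotvZl !mul0r subr0.
  by apply: mulr_ge0; [exact: ltW | exact: sqrtr_ge0].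
have c_gt0 : 0 < c by rewrite lt_neqAle eq_sym c_neq0.
have [d d_gt0 dP] := reg (e / c) (divr_gt0 e_gt0 c_gt0).
exists d => // x' y' Pxy' near_xy; rewrite !dotvZl -mulrBr.
have := dP x' y' Pxy' near_xy; rewrite -(ler_pM2l c_gt0) => /le_trans; apply.
by rewrite mulrA mulrCA mulfV ?mulr1.
Qed.

Section PseudoCoderivOfSequences.
Variables (R : realType) (n m : nat) (Phi : 'rV[R]_n -> 'rV[R]_m -> Prop).
Variables (xb : 'rV[R]_n) (yb : 'rV[R]_m) (gamma : R).
Variables (x : nat -> 'rV[R]_n) (y : nat -> 'rV[R]_m).
Variables (xsk : nat -> 'rV[R]_n) (ysk : nat -> 'rV[R]_m).
Hypotheses (x_neq : forall k, x k != xb) (x_cvg : x @ \oo --> xb)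
  (reg : forall k, reg_coderiv Phi (x k) (y k) (ysk k) (xsk k)).

Let t k := enorm (x k - xb).
Let dir k := (t k)^-1 *: (x k - xb).

Let t_gt0 k : 0 < t k.
Proof. by rewrite enorm_gt0 subr_eq0. Qed.

Let t_cvg0 : t @ \oo --> 0.
Proof.
have : (fun k => x k - xb) @ \oo --> (0 : 'rV[R]_n).
  by rewrite -(subrr xb); apply: cvgB => //; exact: cvg_cst.
by move/cvg_enorm; rewrite enorm0.
Qed.

Let dir_enorm k : enorm (dir k) = 1.
Proof. by rewrite enorm_normalize // subr_eq0. Qed.

Let dir_shift k : xb + t k *: dir k = x k.
Proof. by rewrite scale_enorm_normalize ?subr_eq0 // addrC subrK. Qed.

Lemma pseudo_coderiv_of_seq (a : nat -> R) u v xs ys :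
  (forall k, 0 <= a k) ->
  dir @ \oo --> u ->
  (fun k => (t k `^ gamma)^-1 *: (y k - yb)) @ \oo --> v ->
  (fun k => a k *: xsk k) @ \oo --> xs ->
  (fun k => (a k * t k `^ (gamma - 1)) *: ysk k) @ \oo --> ys ->
  pseudo_coderiv gamma Phi xb yb u v ys xs.
Proof.
move=> a_ge0 dir_u y_v xs_cvg ys_cvg.
exists dir, (fun k => (t k `^ gamma)^-1 *: (y k - yb)), (fun k => a k *: xsk k),
  (fun k => (a k * t k `^ (gamma - 1)) *: ysk k), t.
split; first by split.
split=> // k; rewrite dir_shift dir_enorm mulr1 !scalerA.
rewrite mulfV ?gt_eqF ?powR_gt0 // scale1r addrC subrK [_ * a k]mulrC.
exact: reg_coderiv_scale (mulr_ge0 (a_ge0 k) (powR_ge0 _ _)) (reg k).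
Qed.

Lemma G_pseudo_coderiv_of_seq u v xs ys :
  dir @ \oo --> u ->
  (fun k => (t k)^-1 *: (y k - yb)) @ \oo --> v ->
  xsk @ \oo --> xs ->
  (fun k => t k `^ (gamma - 1) *: ysk k) @ \oo --> ys ->
  G_pseudo_coderiv gamma Phi xb yb u v ys xs.
Proof.
move=> dir_u y_v xs_cvg ys_cvg.
exists dir, (fun k => (t k)^-1 *: (y k - yb)), xsk,
  (fun k => t k `^ (gamma - 1) *: ysk k), t.
split; first by split.
split=> // k; rewrite dir_shift dir_enorm mulr1 [in X in yb + X]scalerA.
rewrite mulfV ?gt_eqF // scale1r addrC subrK.
exact: reg_coderiv_scale (powR_ge0 _ _) (reg k).
Qed.

End PseudoCoderivOfSequences.

Section AsymptoticSequences.
Variables (R : realType) (n m : nat) (Phi : 'rV[R]_n -> 'rV[R]_m -> Prop).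
Variables (xb : 'rV[R]_n) (yb : 'rV[R]_m) (u : 'rV[R]_n) (gamma : R).

Record asymp_seq (x : nat -> 'rV[R]_n) (y : nat -> 'rV[R]_m) (xsk : nat -> 'rV[R]_n)
    (lam : nat -> 'rV[R]_m) (xs : 'rV[R]_n) (ys : 'rV[R]_m) : Prop := AsympSeq {
  asymp_x_neq : forall k, x k != xb;
  asymp_y_neq : forall k, y k != yb;
  asymp_reg : forall k, reg_coderiv Phi (x k) (y k) (lam k) (xsk k);
  asymp_x_cvg : x @ \oo --> xb;
  asymp_xs_cvg : xsk @ \oo --> xs;
  asymp_dir_cvg : (fun k => (enorm (x k - xb))^-1 *: (x k - xb)) @ \oo --> u;
  asymp_y_cvg : (fun k => (enorm (x k - xb))^-1 *: (y k - yb)) @ \oo --> (0 : 'rV[R]_m);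
  asymp_lam_cvgy : (fun k => enorm (lam k)) @ \oo --> +oo;
  asymp_align : (fun k => (enorm (y k - yb))^-1 *: (y k - yb) - (enorm (lam k))^-1 *: lam k)
    @ \oo --> (0 : 'rV[R]_m);
  asymp_ys_cvg : (fun k => (enorm (y k - yb) / enorm (x k - xb)) *: lam k) @ \oo --> ys }.

Lemma asymp_seq_subseq x y xsk lam xs ys (f : nat -> nat) :
  increasing_seq f -> asymp_seq x y xsk lam xs ys ->
  asymp_seq (x \o f) (y \o f) (xsk \o f) (lam \o f) xs ys.
Proof.
move=> f_incr [x_neq y_neq reg x_cvg xs_cvg dir_cvg y_cvg lam_cvg align ys_cvg].
split=> [k|k|k|||||||]; [exact: x_neq | exact: y_neq | exact: reg |..].
- exact: cvg_subseq f_incr x_cvg.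
- exact: cvg_subseq f_incr xs_cvg.
- exact: cvg_subseq f_incr dir_cvg.
- exact: cvg_subseq f_incr y_cvg.
- exact: cvg_subseq f_incr lam_cvg.
- exact: cvg_subseq f_incr align.
- exact: cvg_subseq f_incr ys_cvg.
Qed.

Section OneSequence.
Variables (x : nat -> 'rV[R]_n) (y : nat -> 'rV[R]_m) (xsk : nat -> 'rV[R]_n)
  (lam : nat -> 'rV[R]_m) (xs : 'rV[R]_n) (ys : 'rV[R]_m).
Hypothesis S : asymp_seq x y xsk lam xs ys.

Let t k := enorm (x k - xb).
Let c k := t k `^ (gamma - 1).
Let s k := c k * enorm (lam k).
Let q k := enorm (y k - yb) / t k * enorm (lam k).
Let e k := (enorm (y k - yb))^-1 *: (y k - yb).

Let t_gt0 k : 0 < t k.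
Proof. by rewrite enorm_gt0 subr_eq0 (asymp_x_neq S). Qed.

Let c_gt0 k : 0 < c k.
Proof. exact: powR_gt0. Qed.

Lemma asymp_seq_lam_neq0 : \forall k \near \oo, lam k != 0.
Proof.
have /cvgryPge/(_ 1) := asymp_lam_cvgy S; apply: filterS => k.
by rewrite -enorm_gt0; exact: lt_le_trans ltr01.
Qed.

Let s_gt0 : \forall k \near \oo, 0 < s k.
Proof.
by apply: filterS asymp_seq_lam_neq0 => k lk; rewrite mulr_gt0 ?enorm_gt0.
Qed.

Let q_cvg : q @ \oo --> enorm ys.
Proof.
suff -> : q = fun k => enorm ((enorm (y k - yb) / t k) *: lam k).
  exact: cvg_enorm (asymp_ys_cvg S).
by apply/funext => k; rewrite enormZ ger0_norm // divr_ge0 ?enorm_ge0.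
Qed.

Let scaled_y_eq :
  \forall k \near \oo, (t k `^ gamma)^-1 *: (y k - yb) = (q k / s k) *: e k.
Proof.
apply: filterS asymp_seq_lam_neq0 => k lk.
have r_gt0 : 0 < enorm (y k - yb) by rewrite enorm_gt0 subr_eq0 (asymp_y_neq S).
have l_gt0 : 0 < enorm (lam k) by rewrite enorm_gt0.
rewrite /e scalerA /q /s /c (powR_subr1 gamma (t_gt0 k)).
by congr (_ *: _); field; rewrite !gt_eqF ?c_gt0.
Qed.

Lemma asymp_seq_G_pseudo (y' : 'rV[R]_m) :
  (fun k => enorm (x k - xb) `^ (gamma - 1) *: lam k) @ \oo --> y' -> G_pseudo_coderiv gamma Phi xb yb u 0 y' xs.
Proof.
move=> cy.
exact: (G_pseudo_coderiv_of_seq (yb := yb) (gamma := gamma) (asymp_x_neq S)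
  (asymp_x_cvg S) (asymp_reg S) (asymp_dir_cvg S) (asymp_y_cvg S) (asymp_xs_cvg S) cy).
Qed.

Lemma asymp_seq_pseudo (y' : 'rV[R]_m) :
  (fun k => enorm (x k - xb) `^ (gamma - 1) *: lam k) @ \oo --> y' -> y' != 0 ->
  pseudo_coderiv gamma Phi xb yb u ((enorm ys / enorm y') *: ((enorm y')^-1 *: y')) y' xs.
Proof.
move=> cy y'0; have ey'0 : enorm y' != 0 by rewrite enorm_eq0.
have s_cvg : s @ \oo --> enorm y'.
  suff -> : s = fun k => enorm (c k *: lam k) by exact: cvg_enorm cy.
  by apply/funext => k; rewrite enormZ gtr0_norm.
have e_cvg : e @ \oo --> (enorm y')^-1 *: y'.
  rewrite -[_ *: y']add0r.
  apply: cvg_near_eq (cvgD (asymp_align S) (cvgZ (cvgV ey'0 s_cvg) cy)); near=> k.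
  have lk : lam k != 0 by near: k; exact: asymp_seq_lam_neq0.
  by rewrite addrfctE /= scalerA /s invfM mulrAC mulVf ?(gt_eqF (c_gt0 k)) // mul1r subrK.
apply: (pseudo_coderiv_of_seq (asymp_x_neq S) (asymp_x_cvg S) (asymp_reg S)
  (a := fun=> 1)) _ (asymp_dir_cvg S) _ _ _ => //.
- exact: cvg_near_eq scaled_y_eq (cvgZ (cvgM q_cvg (cvgV ey'0 s_cvg)) e_cvg).
- by under eq_fun do rewrite scale1r; exact: asymp_xs_cvg S.
- by under eq_fun do rewrite mul1r.
Unshelve. all: by end_near.
Qed.

Lemma asymp_seq_ker (w : 'rV[R]_m) :
  (fun k => enorm (x k - xb) `^ (gamma - 1) * enorm (lam k)) @ \oo --> +oo ->
  (fun k => (enorm (lam k))^-1 *: lam k) @ \oo --> w ->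
  pseudo_coderiv gamma Phi xb yb u 0 w 0.
Proof.
move=> sy lw; have sV0 : (fun k => (s k)^-1) @ \oo --> (0 : R).
  exact: (gtr0_cvgV0 s_gt0).2 sy.
apply: (pseudo_coderiv_of_seq (asymp_x_neq S) (asymp_x_cvg S) (asymp_reg S)
  (a := fun k => (s k)^-1)) _ (asymp_dir_cvg S) _ _ _.
- by move=> k /=; rewrite invr_ge0 /s mulr_ge0 ?enorm_ge0 // ltW.
- have qs0 : (fun k => q k / s k) @ \oo --> (0 : R).
    by rewrite -(mulr0 (enorm ys)); exact: cvgM.
  apply: enorm_cvg0; apply: (cvg_near_eq _ qs0).
  apply: filterS2 asymp_seq_lam_neq0 scaled_y_eq => k lk ->.
  rewrite enormZ enorm_normalize ?subr_eq0 ?(asymp_y_neq S) // mulr1 ger0_norm //.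
  by rewrite /q /s !(divr_ge0, mulr_ge0, enorm_ge0, powR_ge0).
- by rewrite -(scale0r xs); exact: cvgZ sV0 (asymp_xs_cvg S).
- apply: cvg_near_eq lw; apply: filterS asymp_seq_lam_neq0 => k lk.
  by rewrite /s invfM mulrAC mulVf ?(gt_eqF (c_gt0 k)) // mul1r.
Qed.

End OneSequence.

Lemma asymp_seq_rescaled_lam_not_cvgy x y xsk lam xs ys :
  (forall w, ker_coderiv (pseudo_coderiv gamma Phi xb yb u 0) w -> w = 0) ->
  asymp_seq x y xsk lam xs ys ->
  ~ (fun k => enorm (x k - xb) `^ (gamma - 1) * enorm (lam k)) @ \oo --> +oo.
Proof.
move=> ker0 S sy; pose w k := (enorm (lam k))^-1 *: lam k.
have w_le1 k : enorm (w k) <= 1.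
  have [lk0|lk] := eqVneq (lam k) 0; last by rewrite enorm_normalize.
  by rewrite /w lk0 scaler0 enorm0.
have [f f_incr [w' ww']] := enorm_bounded_cvg_subseq w_le1.
have Sf := asymp_seq_subseq f_incr S.
have w'_unit : enorm w' = 1.
  have w1 : (fun k => enorm (w (f k))) @ \oo --> (1 : R).
    apply: (cvg_near_eq _ (cvg_cst (1 : R))).
    by apply: filterS (asymp_seq_lam_neq0 Sf) => k lk; rewrite enorm_normalize.
  exact: norm_cvg_unique (cvg_enorm ww') w1.
have /ker0 w'0 := asymp_seq_ker Sf (cvg_subseq f_incr sy) ww'.
by move: w'_unit; rewrite w'0 enorm0 => /eqP; rewrite eq_sym oner_eq0.
Qed.

Lemma asymp_seq_pseudo_limits x y xsk lam xs ys :
  (forall w, ker_coderiv (pseudo_coderiv gamma Phi xb yb u 0) w -> w = 0) ->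
  asymp_seq x y xsk lam xs ys ->
  exists y' : 'rV[R]_m, G_pseudo_coderiv gamma Phi xb yb u 0 y' xs /\
    (y' = 0 \/ exists alpha beta : R, [/\ 0 <= alpha, 0 <= beta &
       exists2 v, enorm v = 1 & pseudo_coderiv gamma Phi xb yb u (alpha *: v) (beta *: v) xs]).
Proof.
move=> ker0 S.
have [sy|[M [f f_incr sM]]] :=
  cvgry_or_bounded_subseq (fun k => enorm (x k - xb) `^ (gamma - 1) * enorm (lam k)).
  by have := asymp_seq_rescaled_lam_not_cvgy ker0 S sy.
pose z k := enorm (x (f k) - xb) `^ (gamma - 1) *: lam (f k).
have zM k : enorm (z k) <= M by rewrite enormZ ger0_norm ?powR_ge0.
have [h h_incr [y' zy']] := enorm_bounded_cvg_subseq zM.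
have Sfh := asymp_seq_subseq (increasing_seq_comp f_incr h_incr) S.
exists y'; split; first exact: (asymp_seq_G_pseudo Sfh).
have [->|y'0] := eqVneq y' 0; [by left | right].
exists (enorm ys / enorm y'), (enorm y'); split; rewrite ?divr_ge0 ?enorm_ge0 //.
exists ((enorm y')^-1 *: y'); first exact: enorm_normalize.
by rewrite scale_enorm_normalize //; apply: (asymp_seq_pseudo Sfh).
Qed.

Lemma asymp_regular_of_seq :
  Phi xb yb ->
  (forall x y xsk lam xs ys, asymp_seq x y xsk lam xs ys -> Im_coderiv (lim_coderiv Phi xb yb) xs) ->
  asymp_regular Phi xb yb u.
Proof.
move=> Pb Him x y xsk lam xs ys _ xPhi y_neq reg x_cvg _ xs_cvg dir_cvg y_cvg lam_cvg
  align ys_cvg.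
apply: (Him x y xsk lam xs ys); split=> // k; apply/eqP; last exact: y_neq.
by move=> xk; apply: (xPhi k); rewrite xk.
Qed.

End AsymptoticSequences.

Theorem mainTheorem10 (R : realType) (n m : nat)
  (Phi : 'rV[R]_n -> 'rV[R]_m -> Prop) (xb : 'rV[R]_n) (yb : 'rV[R]_m)
  (u : 'rV[R]_n) (gamma : R) :
  closed_graph Phi ->
  Phi xb yb ->
  enorm u = 1 ->
  1 < gamma ->
  (forall ys : 'rV[R]_m,
     ker_coderiv (pseudo_coderiv gamma Phi xb yb u 0) ys <-> ys = 0) ->
  ((forall alpha beta : R, 0 <= alpha -> 0 <= beta ->
      forall xs : 'rV[R]_n,
        (G_pseudo_coderiv gamma Phi xb yb u 0 0 xs \/
         exists2 v : 'rV[R]_m, enorm v = 1 &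
           pseudo_coderiv gamma Phi xb yb u (alpha *: v) (beta *: v) xs) ->
        Im_coderiv (lim_coderiv Phi xb yb) xs) ->
    asymp_regular Phi xb yb u)
  /\
  ((forall xs : 'rV[R]_n,
      Im_coderiv (G_pseudo_coderiv gamma Phi xb yb u 0) xs ->
      Im_coderiv (lim_coderiv Phi xb yb) xs) ->
    asymp_regular Phi xb yb u).
Proof.
move=> _ Pb _ _ ker; have ker0 w := (ker w).1.
split=> Him; apply: asymp_regular_of_seq Pb _ => x y xsk lam xs ys S;
  have [y' [Gy' pseudo_y']] := asymp_seq_pseudo_limits ker0 S.
- case: pseudo_y' => [y'0|[alpha [beta [alpha_ge0 beta_ge0 pseudo_v]]]].
    by apply: (Him 0 0 (lexx 0) (lexx 0)); left; rewrite y'0 in Gy'.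
  by apply: (Him alpha beta alpha_ge0 beta_ge0); right.
- by apply: Him; exists y'.
Qed.
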